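(* Fix integers $q\ge 1$ and $k\ge 5$, and let $G(q,k)$ be the graph on vertex set $\{v_0,v_1,\ldots,v_{kq}\}$ in which, with all indices taken modulo $kq+1$, the neighbourhood of $v_i$ is $$\{v_{i-1},v_{i+1}\}\cup\{v_{i+kj+m} : m=2,3,\ldots,k-1,\ j=0,1,\ldots,q-1\}.$$ Then $G(q,k)$ is $C_5$-free.
   Context: $C_5$ is the cycle on five vertices. A graph is $H$-free if it contains no induced subgraph isomorphic to $H$. *)

From mathcomp Require Import all_boot.
Set Implicit Arguments. Unset Strict Implicit. Unset Printing Implicit Defensive.

Definition has_induced (T U : finType) (e : rel T) (h : rel U) : Prop :=
  exists f : U -> T, injective f /\ forall x y, e (f x) (f y) = h x y.

Definition C5_adj : rel 'I_5 :=
  fun i j => (j == (i + 1) %% 5 :> nat) || (i == (j + 1) %% 5 :> nat).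

Definition H_free (T U : finType) (e : rel T) (h : rel U) : Prop :=
  ~ has_induced e h.

Definition G_adj (q k : nat) : rel 'I_(k * q).+1 :=
  fun x y =>
    let n := (k * q).+1 in
    [|| (y == (x + 1) %% n :> nat),
        (y == (x + n - 1) %% n :> nat)
      | [exists j : 'I_q, exists m : 'I_k,
           (2 <= m) && (y == (x + k * j + m) %% n :> nat)]].
Arguments G_adj q k : clear implicits.

(* Distinct vertices v_x, v_y of G(q,k) are non-adjacent exactly when
   |x - y| = kj or kj + 1 with 0 < j < q.  Since C_5 is self-complementary
   (via i |-> 2i), an induced C_5 yields positions b_0, ..., b_4 in [0, kq]
   whose consecutive differences are non-edge distances,
   b_(i+1) - b_i = m_i k + r_i with 0 < |m_i| < q and r_i in {0, sgn m_i},
   while the chords b_(i+2) - b_i are edge distances.  Inspecting the chords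
   shows that residues at cyclic distance 1 or 2 never have opposite signs,
   so all r_i have the same sign; as the differences sum to 0 and k >= 5,
   all r_i vanish.  Every chord is then a nonzero multiple of k that is an
   edge distance, i.e. +-kq, so all five vertices lie in {0, kq}. *)

From mathcomp Require Import all_boot all_order all_algebra.
From mathcomp Require Import zify.

Set Implicit Arguments. Unset Strict Implicit. Unset Printing Implicit Defensive.
Import Order.TTheory GRing.Theory Num.Theory.

Lemma leq_muln_succ k j q : j < q -> k * j + k <= k * q.
Proof. by move=> ltjq; rewrite addnC -mulnS leq_mul2l ltjq orbT. Qed.

Lemma eq_modn_add n x y a : x < n -> y < n -> a < n ->
  (y == (x + a) %% n) = ((y + n - x) %% n == a).
Proof.
move=> ltxn ltyn ltan; have lexyn : x <= y + n by lia.
rewrite -[y in LHS](modn_small ltyn) -modnDr -[y + n in LHS](subnKC lexyn).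
by rewrite eqn_modDl (modn_small ltan).
Qed.

Section Circulant.

Variables q k : nat.
Local Notation n := (k * q).+1.

Definition nonedge_dist (t : nat) : bool :=
  [exists j : 'I_q, exists m : 'I_k, [&& 0 < j, m <= 1 & t == k * j + m]].

Definition edge_offset (a : nat) : bool :=
  [|| a == 1, a == k * q
    | [exists j : 'I_q, exists m : 'I_k, (2 <= m) && (a == k * j + m)]].

Lemma G_adj_offset (x y : 'I_n) : 1 < n ->
  G_adj q k x y = edge_offset ((y + n - x) %% n).
Proof.
move=> n_gt1; have [ltxn ltyn] := (ltn_ord x, ltn_ord y).
rewrite /G_adj /edge_offset /= -addnBA // subn1 !eq_modn_add //; try lia.
congr [|| _, _ | _]; apply: eq_existsb => j; apply: eq_existsb => m.
have ltmk := ltn_ord m; have lejq := leq_muln_succ k (ltn_ord j).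
by rewrite -addnA eq_modn_add //; lia.
Qed.

Hypothesis k_gt1 : 1 < k.

Lemma exists_ord_mulnD (P : nat -> nat -> bool) a :
  [exists j : 'I_q, exists m : 'I_k, P j m && (a == k * j + m)]
    = P (a %/ k) (a %% k) && (a %/ k < q).
Proof.
have k_gt0 : 0 < k by lia.
apply/existsP/andP => [[j /existsP[m /andP[Pjm /eqP->]]] | [Pa ltaq]].
  by rewrite mulnC divnMDl // modnMDl divn_small // modn_small // addn0.
exists (Ordinal ltaq); apply/existsP; exists (Ordinal (ltn_pmod a k_gt0)).
by rewrite /= Pa; apply/eqP; rewrite mulnC -divn_eq.
Qed.

Lemma nonedge_distP t :
  reflect (exists j m, [/\ 0 < j < q, m <= 1 & t = k * j + m]) (nonedge_dist t).
Proof.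
apply: (iffP existsP) => [[j /existsP[m /and3P[j_gt0 m_le1 /eqP->]]] | ].
  by exists j, m; rewrite j_gt0 ltn_ord.
move=> [j [m [/andP[j_gt0 ltjq] m_le1 ->]]].
have ltmk : m < k by lia.
exists (Ordinal ltjq); apply/existsP; exists (Ordinal ltmk).
by rewrite /= j_gt0 m_le1 eqxx.
Qed.

Lemma nonedge_dist_divn a :
  nonedge_dist a = [&& 0 < a %/ k, a %% k <= 1 & a %/ k < q].
Proof.
rewrite andbA -(exists_ord_mulnD (fun j m => (0 < j) && (m <= 1))).
by apply: eq_existsb => j; apply: eq_existsb => m; rewrite andbA.
Qed.

Lemma edge_offsetE a : 0 < a < n -> edge_offset a = ~~ nonedge_dist a.
Proof.
move=> /andP[a_gt0 ltan]; have k_gt0 : 0 < k by lia.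
rewrite /edge_offset (exists_ord_mulnD (fun _ m => 1 < m)) nonedge_dist_divn.
move: (divn_eq a k) (ltn_pmod a k_gt0); move: (a %/ k) (a %% k) => J R eq_a ltRk.
have small_J : J < q -> J * k + k <= q * k.
  by move=> ltJq; rewrite addnC -mulSn leq_mul2r ltJq orbT.
have large_J : q <= J -> q * k <= J * k by move=> leqJ; rewrite leq_mul2r leqJ orbT.
have pos_J : 0 < J -> k <= J * k.
  by move=> J_gt0; rewrite -{1}(mul1n k) leq_mul2r J_gt0 orbT.
rewrite (mulnC k q); lia.
Qed.

Lemma nonedge_dist_subn t : t <= n -> nonedge_dist (n - t) = nonedge_dist t.
Proof.
suff nonedge_sub s : nonedge_dist s -> nonedge_dist (n - s).
  move=> letn; apply/idP/idP => [/nonedge_sub | /nonedge_sub //].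
  by rewrite subKn.
move=> /nonedge_distP[j [m [/andP[j_gt0 ltjq] m_le1 ->]]].
have lejq := leq_muln_succ k ltjq.
by apply/nonedge_distP; exists (q - j), (1 - m); split; rewrite ?mulnBr; lia.
Qed.

Lemma G_adjE (x y : 'I_n) : x != y -> G_adj q k x y = ~~ nonedge_dist `|x - y|.
Proof.
move=> neq_xy; have [ltxn ltyn] := (ltn_ord x, ltn_ord y).
have neq_xy' : x <> y :> nat by move=> /val_inj eq_xy; rewrite eq_xy eqxx in neq_xy.
rewrite G_adj_offset; last by lia.
have [lexy | ltyx] := leqP x y.
  have -> : (y + n - x) %% n = `|x - y| by rewrite -addnBAC // modnDr modn_small; lia.
  by rewrite edge_offsetE //; lia.
have -> : (y + n - x) %% n = n - `|x - y| by rewrite modn_small; lia.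
by rewrite edge_offsetE ?nonedge_dist_subn //; lia.
Qed.

End Circulant.

Local Open Scope ring_scope.

Lemma ord5_dist_le2 (i j : 'I_5) :
  i != j -> [|| j == i + 1, j == i + 2, i == j + 1 | i == j + 2].
Proof. by move: i j; do 2!case=> [[|[|[|[|[|//]]]]] ?]. Qed.

Lemma sumr_translateB (G : finZmodType) (V : zmodType) (F : G -> V) (a : G) :
  \sum_i (F (i + a) - F i) = 0.
Proof. by rewrite sumrB [X in _ - X](reindex_inj (addIr a)) subrr. Qed.

Lemma nonneg_residues_eq0 (I : finType) (k : nat) (m r : I -> int) :
    (#|I| <= k)%N -> (forall i, r i = 0 \/ r i = 1 /\ 0 < m i) ->
  \sum_i (m i * k + r i) = 0 -> forall i, r i = 0.
Proof.
move=> le_I_k r01; rewrite big_split -mulr_suml /= => sum0.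
have [r_ge0 r_le1] : (forall i, 0 <= r i) /\ (forall i, r i <= 1).
  by split=> i; case: (r01 i) => [->|[->]].
have sum_r_ge0 : 0 <= \sum_i r i by apply: sumr_ge0.
have sum_r_le : \sum_i r i <= #|I| by rewrite -natz -sum1_card natr_sum ler_sum.
have all_r1 : \sum_i r i = #|I| -> forall i, r i = 1.
  move=> sum_r_card i; apply/eqP; rewrite eq_sym -subr_eq0; apply/eqP.
  apply: (psumr_eq0P (P := predT) (F := fun i => 1 - r i)) => // [j _|].
    by rewrite subr_ge0.
  by rewrite sumrB sumr_const sum_r_card natz subrr.
have sum_m_ge0 : (forall i, r i = 1) -> 0 <= \sum_i m i.
  by move=> r1; apply: sumr_ge0 => i _; case: (r01 i) => [|[_ /ltW]]; rewrite ?r1.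
(* [\sum_i r i] is a multiple of [k] in [[0, #|I|]]; if it is nonzero it
   equals [#|I|], so every [r i] is 1 and every [m i] is positive. *)
suff sum_r0 : \sum_i r i = 0 by move=> i; apply: (psumr_eq0P _ sum_r0).
move: sum_r_ge0 sum_r_le all_r1 sum_m_ge0 sum0.
set S := \sum_i r i; set M := \sum_i m i => S_ge0 S_le all_r1 sum_m_ge0 sum0.
have k_ge0 : 0 <= k%:Z by [].
have [M_ge0 | M_lt0] := leP 0 M; first by nia.
have S_card : S = #|I| by nia.
by have := sum_m_ge0 (all_r1 S_card); lia.
Qed.

Section NonedgeSplit.

Variables q k : nat.
Hypothesis k_gt1 : (1 < k)%N.

Definition nonedge_split (m r : int) : Prop :=
  [/\ m != 0, `|m| < q & [\/ r = 0, r = 1 /\ 0 < m | r = -1 /\ m < 0]].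

Lemma nonedge_distZP (d : int) :
  reflect (exists m r, nonedge_split m r /\ d = m * k + r) (nonedge_dist q k `|d|).
Proof.
apply: (iffP (nonedge_distP q k_gt1 _)) => [[j [r [/andP[j_gt0 ltjq] r_le1 eq_d]]] |].
  have [d_ge0 | d_lt0] := leP 0 d.
    exists j, r; split; [split | lia]; try lia.
    by case: r r_le1 eq_d => [|[|//]] _ _; [apply: Or31 | apply: Or32; split; lia].
  exists (- j%:Z), (- r%:Z); split; [split | lia]; try lia.
  by case: r r_le1 eq_d => [|[|//]] _ _; [apply: Or31 | apply: Or33; split; lia].
move=> [m [r [[m_neq0 ltmq r_cases] ->]]].
exists `|m|%N, `|r|%N; case: r_cases => [-> | [-> m_gt0] | [-> m_lt0]]; split; lia.
Qed.

Lemma edge_mul (M : int) :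
  M != 0 -> ~~ nonedge_dist q k `|M * k| -> q%:Z <= `|M|.
Proof.
move=> M_neq0; apply: contraNT; rewrite -ltNge => ltMq.
by apply/nonedge_distZP; exists M, 0; split; [split => //; apply: Or31 | rewrite addr0].
Qed.

Lemma edge_mulD1 (M : int) :
  `|M * k + 1| <= k * q -> ~~ nonedge_dist q k `|M * k + 1| -> M <= 0.
Proof.
move=> le_kq; apply: contraNT; rewrite -ltNge => M_gt0.
have ltMq : M < q by rewrite -(ltr_pM2r (_ : 0 < k%:Z)); lia.
by apply/nonedge_distZP; exists M, 1; split; [split; [lia | lia | apply: Or32] | ].
Qed.

Lemma edge_mulB1 (M : int) :
  `|M * k - 1| <= k * q -> ~~ nonedge_dist q k `|(M * k - 1)%R| -> 0 <= M.
Proof.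
have -> : M * k - 1 = - ((- M) * k + 1) by rewrite mulNr opprD opprK.
by rewrite !normrN abszN -oppr_le0; apply: edge_mulD1.
Qed.

Lemma nonedge_split_adjacent (m0 r0 m1 r1 : int) :
    nonedge_split m0 r0 -> nonedge_split m1 r1 ->
    (m0 + m1) * k + (r0 + r1) != 0 ->
    ~~ nonedge_dist q k `|(m0 + m1) * k + (r0 + r1)| ->
  r0 * r1 != -1.
Proof.
move=> [_ ltm0q r0_cases] [_ ltm1q r1_cases] c_neq0 edge; apply/eqP => opp.
have [r_sum0 ltMq] : r0 + r1 = 0 /\ `|m0 + m1| < q.
  by move: r0_cases r1_cases opp
    => [-> | [-> ?] | [-> ?]] [-> | [-> ?] | [-> ?]] opp; split; lia.
rewrite r_sum0 addr0 in edge c_neq0.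
have M_neq0 : m0 + m1 != 0 by apply: contraNneq c_neq0 => ->; rewrite mul0r.
by have := edge_mul M_neq0 edge; lia.
Qed.

Lemma nonedge_split_trans (m0 r0 m1 r1 m2 r2 : int) :
    nonedge_split m0 r0 -> nonedge_split m1 r1 -> nonedge_split m2 r2 ->
  r1 != 0 -> r0 * r1 != -1 -> r1 * r2 != -1 -> r0 * r2 != -1.
Proof.
move=> [_ _ r0_cases] [_ _ r1_cases] [_ _ r2_cases].
by move: r0_cases r1_cases r2_cases
  => [-> | [-> _] | [-> _]] [-> | [-> _] | [-> _]] [-> | [-> _] | [-> _]].
Qed.

Lemma nonedge_split_gap (m0 r0 m1 m2 r2 : int) :
    `|(m0 + m1) * k + r0| <= k * q -> ~~ nonedge_dist q k `|(m0 + m1) * k + r0| ->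
    `|(m1 + m2) * k + r2| <= k * q -> ~~ nonedge_dist q k `|(m1 + m2) * k + r2| ->
    nonedge_split m0 r0 -> nonedge_split m2 r2 -> r0 * r2 != -1.
Proof.
(* For [r0 = 1], [r2 = -1] the chords force [m1 <= - m0 < 0] and [m1 >= - m2 > 0]. *)
move=> le0 edge0 le1 edge1 [_ _ r0_cases] [_ _ r2_cases].
move: r0_cases r2_cases le0 edge0 le1 edge1.
move=> [-> | [-> ?] | [-> ?]] [-> | [-> ?] | [-> ?]] le0 edge0 le1 edge1 //.
  by have := edge_mulD1 le0 edge0; have := edge_mulB1 le1 edge1; lia.
by have := edge_mulB1 le0 edge0; have := edge_mulD1 le1 edge1; lia.
Qed.

End NonedgeSplit.

Section NonedgeCycle.

Variables (q k : nat) (b m r : 'I_5 -> int).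
Hypotheses (k_ge5 : (5 <= k)%N) (b_inj : injective b).
Hypothesis b_range : forall i, 0 <= b i <= k * q.
Hypothesis split_mr : forall i, nonedge_split q (m i) (r i).
Hypothesis b_succ : forall i : 'I_5, b (i + 1) - b i = m i * k + r i.
Hypothesis chord_edge : forall i : 'I_5, ~~ nonedge_dist q k `|(b (i + 2) - b i)%R|.

Let k_gt1 : (1 < k)%N. Proof. by apply: leq_trans k_ge5. Qed.

Let addr1_1 (i : 'I_5) : i + 1 + 1 = i + 2. Proof. by rewrite -addrA. Qed.

Lemma chordE i : b (i + 2) - b i = (m i + m (i + 1)) * k + (r i + r (i + 1)).
Proof.
by rewrite -addr1_1 -[b (i + 1 + 1)](subrK (b (i + 1))) -addrA !b_succ; lia.
Qed.

Lemma chord_le i : `|b (i + 2) - b i| <= k * q.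
Proof. by have := b_range i; have := b_range (i + 2); lia. Qed.

Lemma chord_neq0 i : b (i + 2) - b i != 0.
Proof.
rewrite subr_eq0; apply: contraTneq isT => /b_inj.
by case: i => [[|[|[|[|[|//]]]]] ?].
Qed.

Lemma residues_adjacent i : r i * r (i + 1) != -1.
Proof.
have := chord_edge i; have := chord_neq0 i; rewrite chordE.
exact: (nonedge_split_adjacent k_gt1 (split_mr i) (split_mr (i + 1))).
Qed.

Lemma residues_gap i : r i * r (i + 2) != -1.
Proof.
have [ri1_0 | ri1_neq0] := eqVneq (r (i + 1)) 0; last first.
  have := residues_adjacent (i + 1); rewrite addr1_1.
  exact: nonedge_split_trans (split_mr i) (split_mr (i + 1)) (split_mr (i + 2))
    ri1_neq0 (residues_adjacent i).
have := chord_edge (i + 1); have := chord_le (i + 1); rewrite chordE addr1_1 ri1_0 add0r.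
have := chord_edge i; have := chord_le i; rewrite chordE ri1_0 addr0.
move=> le0 edge0 le1 edge1.
by apply: (nonedge_split_gap k_gt1 le0 edge0 le1 edge1); apply: split_mr.
Qed.

Lemma residues_same_sign : (forall i, 0 <= r i) \/ (forall i, r i <= 0).
Proof.
have not_opp i j : r i * r j != -1.
  have [<- | /ord5_dist_le2] := eqVneq i j.
    by have [_ _ ri] := split_mr i; case: ri => [->|[->]|[->]].
  case/or4P=> /eqP->.
  - exact: residues_adjacent.
  - exact: residues_gap.
  - by rewrite mulrC residues_adjacent.
  - by rewrite mulrC residues_gap.
case: (boolP [exists i, 0 < r i]) => [/existsP[i ri_gt0] | /existsPn r_le0].
  left=> j.
  have [_ _ ri] := split_mr i; have [_ _ rj] := split_mr j; move: (not_opp i j).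
  by case: ri ri_gt0 => [->|[-> _]|[-> _]] //; case: rj => [->|[-> _]|[-> _]].
by right=> j; rewrite leNgt r_le0.
Qed.

Lemma residues_eq0 i : r i = 0.
Proof.
have sum0 : \sum_j (m j * k + r j) = 0.
  by rewrite -[RHS](sumr_translateB b 1); apply: eq_bigr => j _; rewrite b_succ.
have card5 : (#|'I_5| <= k)%N by rewrite card_ord.
case: residues_same_sign => [r_ge0 | r_le0].
  apply: (nonneg_residues_eq0 card5 _ sum0) => j.
  have [_ _ rj] := split_mr j; move: (r_ge0 j).
  by case: rj => [-> | [-> m_gt0] | [-> _]] // _; [left | right].
apply/eqP; rewrite -oppr_eq0; apply/eqP; move: i.
apply: (nonneg_residues_eq0 (m := fun j => - m j) card5) => [j|].
  have [_ _ rj] := split_mr j; move: (r_le0 j).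
  by case: rj => [-> | [-> _] | [-> m_lt0]] // _; [left; rewrite oppr0 | right; rewrite oppr_gt0].
rewrite (eq_bigr (fun j => - (m j * k + r j))) => [|j _]; last by rewrite mulNr opprD.
by rewrite sumrN sum0 oppr0.
Qed.

Lemma cycle_vertex_extreme i : b i = 0 \/ b i = k * q.
Proof.
have := chordE i; rewrite !residues_eq0 addr0; move: (m i + m (i + 1)) => M chord.
have edge := chord_edge i; have neq0 := chord_neq0 i; rewrite chord in edge neq0.
have M_neq0 : M != 0 by apply: contraNneq neq0 => ->; rewrite mul0r.
have le_M := edge_mul k_gt1 M_neq0 edge.
have := chord_le i; rewrite chord normrM [`|k%:Z|]ger0_norm // => le_Mk.
have := b_range i; have := b_range (i + 2); move: chord; move: (b i) (b (i + 2)) => x y.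
nia.
Qed.

Lemma nonedge_cycle_false : False.
Proof.
have neq_b (i j : 'I_5) : i != j -> b i != b j by rewrite (inj_eq b_inj).
have := neq_b 0 1 isT; have := neq_b 0 2 isT; have := neq_b 1 2 isT.
have := cycle_vertex_extreme 0; have := cycle_vertex_extreme 1; have := cycle_vertex_extreme 2.
lia.
Qed.

End NonedgeCycle.

Lemma no_nonedge_cycle (q k : nat) (b : 'I_5 -> int) :
    (5 <= k)%N -> injective b -> (forall i, 0 <= b i <= k * q) ->
    (forall i : 'I_5, nonedge_dist q k `|(b (i + 1) - b i)%R|) ->
  ~ (forall i : 'I_5, ~~ nonedge_dist q k `|(b (i + 2) - b i)%R|).
Proof.
move=> k_ge5 b_inj b_range cycle_nonedge chord_edge.
have k_gt1 : (1 < k)%N by apply: leq_trans k_ge5.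
have [m split_m] :=
  fin_all_exists (fun i => elimT (nonedge_distZP q k_gt1 _) (cycle_nonedge i)).
have [r split_mr] := fin_all_exists split_m.
exact: (nonedge_cycle_false k_ge5 b_inj b_range (fun i => (split_mr i).1)
          (fun i => (split_mr i).2) chord_edge).
Qed.

Lemma C5_adj_double i :
  C5_adj (i * 2) ((i + 1) * 2) = false /\ C5_adj (i * 2) ((i + 2) * 2).
Proof. by case: i => [[|[|[|[|[|//]]]]] ?]. Qed.

Lemma double_inj : injective (fun i : 'I_5 => i * 2).
Proof.
move=> i j /eqP; apply: contraTeq; move: i j.
by do 2!case=> [[|[|[|[|[|//]]]]] ?].
Qed.

Local Close Scope ring_scope.

Theorem lemma2p5 (q k : nat) :
  1 <= q -> 5 <= k -> H_free (G_adj q k) C5_adj.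
Proof.
(* The argument never uses [1 <= q]: for [q = 0] the graph has one vertex. *)
move=> _ k_ge5 [f [f_inj f_adj]].
pose b (i : 'I_5) : int := f (i * 2)%R.
have b_inj : injective b.
  by move=> i j /eqP; rewrite eqz_nat => /eqP/val_inj/f_inj/double_inj.
have G_adj_b i a : a != 0%R -> G_adj q k (f (i * 2)%R) (f ((i + a) * 2)%R)
                                = ~~ nonedge_dist q k `|(b (i + a) - b i)%R|.
  move=> a_neq0; rewrite G_adjE 1?distnC //; first lia.
  rewrite (inj_eq f_inj) (inj_eq double_inj).
  by rewrite -[X in X != _]addr0 (inj_eq (addrI i)) eq_sym.
apply: (no_nonedge_cycle (q := q) k_ge5 b_inj) => i.
- by rewrite /b; case: (f _) => x /= ?; lia.
- by have := G_adj_b i 1%R isT; rewrite f_adj (C5_adj_double i).1 => /esym/negbFE.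
- by have := G_adj_b i 2%R isT; rewrite f_adj (C5_adj_double i).2 => <-.
Qed.
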